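(* Let $\mathrm{X}=(X_n)_{n\ge1}$ be a sequence of random variables in $\mathbb{T}$, each distributed according to Lebesgue measure (no assumption on their joint law), and let $\mathrm{r}=(r_n)_{n\ge1}$ be a sequence of reals in $(0,1]$. Let $G$ be a nonempty compact subset of $\mathbb{T}$ and let $g$ be a doubling gauge function with $P^g(G)<\infty$. Then: (1) if $\sum_{n=1}^\infty \frac{r_n}{g(r_n)}<\infty$, then almost surely $\mathcal{E}(\mathrm{X},\mathrm{r})\cap G=\emptyset$; (2) for any doubling gauge function $h$, if $\sum_{n=1}^\infty\frac{h(r_n)r_n}{g(r_n)}<\infty$, then almost surely $\mathcal{H}^h(\mathcal{E}(\mathrm{X},\mathrm{r})\cap G)=0$.
   Context: $\mathbb{T}=\mathbb{R}/\mathbb{Z}$ with quotient distance $d$. $\mathcal{E}(\mathrm{X},\mathrm{r})=\{\xi\in\mathbb{T}: d(\xi,X_n)<r_n\text{ for infinitely many }n\ge1\}$. A gauge function is a nondecreasing right-continuous function on $[0,\infty)$ vanishing at zero and only at zero; it is doubling if $g(2r)\le Cg(r)$ for all $r>0$ and some $C>0$. $\mathcal{H}^h$ is the Hausdorff $h$-measure. The packing premeasure is $P^g(E)=\lim_{\delta\downarrow0}P^g_\delta(E)$, where $P^g_\delta(E)=\sup\sum_n g(\mathrm{diam}\,B_n)$, the supremum being over all sequences of disjoint closed balls (arcs) centered in $E$ with diameter less than $\delta$. *)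

From HB Require Import structures.
From mathcomp Require Import all_boot all_order all_algebra.
From mathcomp Require Import all_classical all_reals all_analysis.
Set Implicit Arguments. Unset Strict Implicit. Unset Printing Implicit Defensive.
Import Order.TTheory GRing.Theory Num.Theory.
Import numFieldNormedType.Exports.
Local Open Scope classical_set_scope.
Local Open Scope ring_scope.

(* The circle T = R/Z is represented by R, points differing by an integer
   being identified; dT is the quotient distance (distance of x - y to Z). *)
Section Torus.
Variable R : realType.

Definition fracR (z : R) : R := z - (Num.floor z)%:~R.

Definition dT (x y : R) : R := Num.min (fracR (x - y)) (1 - fracR (x - y)).

(* diameter (w.r.t. dT) of a set; dT is bounded by 1/2 so sup is finite *)
Definition diamT (A : set R) : R := sup [set dT p.1 p.2 | p in A `*` A].

Definition ballT (x rho : R) : set R := [set y | dT x y <= rho].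

Definition Eset (X : nat -> R) (r : nat -> R) : set R :=
  [set xi | forall N, exists n, (N <= n)%N /\ dT xi (X n) < r n].

Definition gauge (g : R -> R) : Prop :=
  [/\ (forall x y, 0 <= x -> x <= y -> g x <= g y),
      (forall x, 0 <= x -> g y @[y --> x^'+] --> g x),
      g 0 = 0 &
      (forall x, 0 <= x -> g x = 0 -> x = 0)].

Definition doubling (g : R -> R) : Prop :=
  exists C : R, 0 < C /\ forall r, 0 < r -> g (2 * r) <= C * g r.

Definition hausdorff_delta (h : R -> R) (delta : R) (A : set R) : \bar R :=
  ereal_inf [set (\sum_(0 <= i <oo) (h (diamT (U i)))%:E)%E
            | U in [set U : nat -> set R |
                    A `<=` \bigcup_i U i /\ forall i, diamT (U i) <= delta]].

Definition hausdorff_measure (h : R -> R) (A : set R) : \bar R :=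
  ereal_sup [set hausdorff_delta h delta A | delta in [set delta : R | 0 < delta]].

(* packing premeasure: P^g_delta(E) is the sup of sum g(diam B_i) over
   (finite or countable) families of pairwise disjoint closed balls
   centered in E with diameter < delta; P^g(E) = lim_{delta -> 0+}, which
   (P^g_delta being nondecreasing in delta) is the inf over delta > 0. *)
Definition packing_delta (g : R -> R) (delta : R) (E : set R) : \bar R :=
  ereal_sup [set s | exists (I : set nat) (c rho : nat -> R),
     [/\ (forall i, I i -> [/\ E (c i), 0 < rho i & diamT (ballT (c i) (rho i)) < delta]),
         (forall i j, I i -> I j -> i <> j ->
            ballT (c i) (rho i) `&` ballT (c j) (rho j) = set0) &
         s = \esum_(i in I) (g (diamT (ballT (c i) (rho i))))%:E]].

Definition packing_premeasure (g : R -> R) (E : set R) : \bar R :=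
  ereal_inf [set packing_delta g delta E | delta in [set delta : R | 0 < delta]].

End Torus.

From HB Require Import structures.
From mathcomp Require Import all_boot all_order all_algebra.
From mathcomp Require Import all_classical all_reals all_analysis.
From mathcomp Require Import measurable_realfun zify ring lra.
Import Order.TTheory GRing.Theory Num.Theory.
Import numFieldNormedType.Exports.
Local Open Scope classical_set_scope.
Local Open Scope ring_scope.

(* Since G has finite packing premeasure, a maximal 2r-separated subset of G
   has O(1/g(r)) points, so the r-neighbourhood of G is covered by O(1/g(r))
   arcs of radius 3r and has Lebesgue measure O(r/g(r)). As X_n is uniform,
   the event F_n that X_n is r_n-close to G has probability O(r_n/g(r_n)).
   Part (1) is then Borel-Cantelli, since a point of E(X,r) ∩ G makes F_n
   occur infinitely often. For part (2), doubling of h bounds the expectation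
   of sum_n h(2 r_n) 1_{F_n} by a multiple of sum_n h(r_n) r_n / g(r_n), so
   almost surely this sum is finite; the arcs of radius r_n around the X_n
   with n >= N and F_n occurring cover E(X,r) ∩ G, and their h-sum is a tail
   of that series. *)

Set Implicit Arguments. Unset Strict Implicit. Unset Printing Implicit Defensive.

Section TorusDistance.
Variable R : realType.
Implicit Types x y z t : R.

Lemma fracR_ge0 t : 0 <= fracR t.
Proof. by rewrite /fracR subr_ge0 floor_le. Qed.

Lemma fracR_lt1 t : fracR t < 1.
Proof. rewrite /fracR; have := floorD1_gt t; rewrite intrD /=; lra. Qed.

Lemma dT_le_norm x y (k : int) : dT x y <= `|x - y - k%:~R|.
Proof.
rewrite /dT ge_min; set t := x - y; set m := Num.floor t - k.
have ft : 0 <= fracR t < 1 by rewrite fracR_ge0 fracR_lt1.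
have -> : t - k%:~R = fracR t + m%:~R by rewrite /fracR /m intrB; ring.
have [m0|m0] := lerP 0 m.
- have m_ge0 : 0 <= m%:~R :> R by rewrite ler0z.
  by rewrite ger0_norm ?lerDl //; lra.
- have m_le : m%:~R <= -1 :> R by rewrite -(intrN R 1) ler_int; lia.
  by rewrite ler0_norm; lra.
Qed.

Lemma dT_eq_norm x y : exists k : int, dT x y = `|x - y - k%:~R|.
Proof.
rewrite /dT /fracR; set t := x - y.
have floor_t := floor_le t; have := floorD1_gt t; rewrite intrD /= => floor1_t.
rewrite /Num.min; case: ifP => _.
- by exists (Num.floor t); rewrite ger0_norm //; lra.
- by exists (Num.floor t + 1); rewrite intrD /= ler0_norm; [ring | lra].
Qed.

Lemma dT_ge0 x y : 0 <= dT x y.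
Proof. by have [k ->] := dT_eq_norm x y. Qed.

Lemma dT_le_half x y : dT x y <= 2^-1.
Proof.
rewrite /dT; have := fracR_ge0 (x - y); have := fracR_lt1 (x - y).
rewrite /Num.min; case: ifP => H ? ?.
- by move: H; set f := fracR _ => H; have : f < 1 - f by []; lra.
- by move: H; set f := fracR _ => /negbT; rewrite -leNgt; lra.
Qed.

Lemma dTC x y : dT x y = dT y x.
Proof.
suff dT_le_sym : forall u v : R, dT u v <= dT v u by apply/eqP; rewrite eq_le !dT_le_sym.
move=> u v; have [k ->] := dT_eq_norm v u.
have -> : v - u - k%:~R = - (u - v - (- k)%:~R) by rewrite intrN; ring.
by rewrite normrN dT_le_norm.
Qed.

Lemma dT_triangle x y z : dT x z <= dT x y + dT y z.
Proof.
have [k1 ->] := dT_eq_norm x y; have [k2 ->] := dT_eq_norm y z.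
apply: le_trans (dT_le_norm x z (k1 + k2)) _.
have -> : x - z - (k1 + k2)%:~R = (x - y - k1%:~R) + (y - z - k2%:~R).
  by rewrite intrD; ring.
exact: ler_normD.
Qed.

Lemma dT_xx x : dT x x = 0.
Proof.
apply/eqP; rewrite eq_le dT_ge0 andbT.
by rewrite (le_trans (dT_le_norm x x 0)) // subrr subr0 normr0.
Qed.

Lemma dT_shift x t : `|t| <= 2^-1 -> dT x (x + t) = `|t|.
Proof.
move=> ht; apply/eqP; rewrite eq_le; apply/andP; split.
  by rewrite (le_trans (dT_le_norm _ _ 0)) // subr0 opprD addrA subrr sub0r normrN.
have [k ->] := dT_eq_norm x (x + t).
have -> : x - (x + t) - k%:~R = - (t + k%:~R) by ring.
rewrite normrN; have [->|k0] := eqVneq k 0; first by rewrite addr0.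
have hk : 1 <= `|k%:~R : R| by rewrite -intr_norm -[1](@mulr1z R) ler_int; lia.
have := lerB_normD (k%:~R : R) t; rewrite [t + _]addrC; lra.
Qed.

Lemma diamT_le (A : set R) s : 0 <= s ->
  (forall x y, A x -> A y -> dT x y <= s) -> diamT A <= s.
Proof.
move=> s0 As; rewrite /diamT; set S := [set _ | _ in _].
have [->|/set0P S0] := eqVneq S set0; first by rewrite sup0.
by apply: ge_sup => // _ [[a b] [/= Aa Ab] <-]; exact: As.
Qed.

Lemma le_diamT (A : set R) x y : A x -> A y -> dT x y <= diamT A.
Proof.
move=> Ax Ay; apply: ub_le_sup; last by exists (x, y).
by exists 2^-1 => _ [[a b] _ <-]; exact: dT_le_half.
Qed.

Lemma diamT_ge0 (A : set R) : 0 <= diamT A.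
Proof.
rewrite /diamT; set S := [set _ | _ in _].
have [->|/set0P [_ [[a b] [Aa Ab] _]]] := eqVneq S set0; first by rewrite sup0.
exact: le_trans (dT_ge0 a b) (le_diamT Aa Ab).
Qed.

Lemma diamT_ballT_le (c rho : R) : 0 <= rho -> diamT (ballT c rho) <= 2 * rho.
Proof.
move=> rho0; apply: diamT_le => [|a b ha hb]; first lra.
by apply: le_trans (dT_triangle a c b) _; rewrite dTC /ballT /= in ha hb *; lra.
Qed.

Lemma le_diamT_ballT (c rho : R) : 0 <= rho <= 2^-1 -> rho <= diamT (ballT c rho).
Proof.
move=> /andP [rho0 rho1].
have e : dT c (c + rho) = rho by rewrite dT_shift ?ger0_norm.
by rewrite -{1}e le_diamT // /ballT /= ?dT_xx ?e.
Qed.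

End TorusDistance.

Section OpenArcs.
Variable R : realType.

Definition oballT (c s : R) : set R := [set x | dT c x < s].

Lemma oballT_bigcup (c s : R) : oballT c s =
  \bigcup_(k in [set: nat]) ([set` `]c + k%:R - s, c + k%:R + s[] `|`
                             [set` `]c - k%:R - s, c - k%:R + s[]).
Proof.
apply/seteqP; split => x /=; rewrite /oballT /= dTC.
- have [[n|n] ->] := dT_eq_norm x c; rewrite ltr_norml => xs.
  + by exists n => //; left; rewrite /= in_itv /=; apply/andP; split; lra.
  + exists n.+1 => //; right; rewrite /= in_itv /=.
    by move: xs; rewrite NegzE rmorphN /= => xs; apply/andP; split; lra.
- move=> [n _ [|]]; rewrite /= in_itv /= => /andP [xs1 xs2].
  + apply: le_lt_trans (dT_le_norm x c n) _.
    by rewrite ltr_norml; apply/andP; split; lra.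
  + apply: le_lt_trans (dT_le_norm x c (- n%:Z)) _; rewrite rmorphN /=.
    by rewrite ltr_norml; apply/andP; split; lra.
Qed.

Lemma measurable_oballT (c s : R) : measurable (oballT c s).
Proof.
rewrite oballT_bigcup; apply: bigcup_measurable => k _.
by apply: measurableU; exact: measurable_itv.
Qed.

Lemma lebesgue_measure_itv_oo (a b : R) : a <= b ->
  lebesgue_measure ([set` `]a, b[] : set R) = (b - a)%:E.
Proof.
move=> ab; rewrite lebesgue_measure_itv /= lte_fin.
have [//|ba] := ltP a b.
suff -> : b = a by rewrite subrr.
by apply/eqP; rewrite eq_le ba ab.
Qed.

(* Modulo 1 the center can be taken in [0, 1), and then an arc of radius at
   most 1 meets [0, 1) only within its three lifts centered at c0 - 1, c0, c0 + 1. *)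
Lemma lebesgue_oballT_le (c s : R) : 0 < s -> s <= 1 ->
  (lebesgue_measure (oballT c s `&` `[0%R, 1%R[) <= (6 * s)%:E)%E.
Proof.
move=> s0 s1; set c0 := fracR c.
set J := fun a : R => ([set` `]a - s, a + s[] : set R).
have mJ a : measurable (J a) by exact: measurable_itv.
have lebJ a : lebesgue_measure (J a) = (2 * s)%:E.
  by rewrite lebesgue_measure_itv_oo; [congr EFin; ring | lra].
have sub : oballT c s `&` `[0%R, 1%R[ `<=` J (c0 - 1) `|` J c0 `|` J (c0 + 1).
  move=> x [/=]; rewrite /oballT /= dTC in_itv /= => + /andP [x0 x1].
  have [k ->] := dT_eq_norm x c; set m := Num.floor c + k.
  have -> : x - c - k%:~R = x - c0 - m%:~R by rewrite /c0 /fracR /m intrD; ring.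
  have := fracR_ge0 c; have := fracR_lt1 c; rewrite -/c0 => c01 c00.
  rewrite ltr_norml => /andP [xs1 xs2].
  clearbody m; have m2 : (-2 < m < 2)%R.
    by rewrite -(ltr_int R) -(ltr_int R) rmorphN /=; lra.
  have : m = -1 \/ m = 0 \/ m = 1 by lia.
  move: xs1 xs2; rewrite /J /= !in_itv /=.
  move=> xs1 xs2 [m_eq|[m_eq|m_eq]]; rewrite m_eq /= in xs1 xs2;
    [left; left|left; right|right];
    by apply/andP; split; lra.
have mA : oballT c s `&` `[0%R, 1%R[ \in measurable.
  by rewrite inE; apply: measurableI; [exact: measurable_oballT|exact: measurable_itv].
have mB : J (c0 - 1) `|` J c0 `|` J (c0 + 1) \in measurable.
  by rewrite inE; do 2 apply: measurableU => //.
apply: le_trans (le_measure (@lebesgue_measure R) mA mB sub) _.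
apply: le_trans (measureU2 _ _ _) _; [by apply: measurableU; apply: mJ|exact: mJ|].
apply: le_trans (leeD (measureU2 _ _ _) (lexx _)) _; [exact: mJ|exact: mJ|].
apply: (@le_trans _ _ (lebesgue_measure (J (c0 - 1)%R) + lebesgue_measure (J c0)
   + lebesgue_measure (J (c0 + 1)%R))%E) => //.
by rewrite !lebJ -!EFinD lee_fin; lra.
Qed.

Lemma lebesgue_bigcup_oballT_le (N : nat) (c : nat -> R) (s : R) : 0 < s -> s <= 1 ->
  (lebesgue_measure ((\bigcup_(i < N) oballT (c i) s) `&` `[0%R, 1%R[)
     <= (N%:R * (6 * s))%:E)%E.
Proof.
move=> s0 s1.
have mS i : measurable (oballT (c i) s `&` `[0%R, 1%R[).
  by apply: measurableI; [exact: measurable_oballT|exact: measurable_itv].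
have sub : (\bigcup_(i < N) oballT (c i) s) `&` `[0%R, 1%R[ `<=`
           \bigcup_(i < N) (oballT (c i) s `&` `[0%R, 1%R[).
  by move=> x [[i iN ?] ?]; exists i.
have mA : (\bigcup_(i < N) oballT (c i) s) `&` `[0%R, 1%R[ \in measurable.
  rewrite inE; apply: measurableI; last exact: measurable_itv.
  by apply: bigcup_measurable => i _; exact: measurable_oballT.
have mB : \bigcup_(i < N) (oballT (c i) s `&` `[0%R, 1%R[) \in measurable.
  by rewrite inE; apply: bigcup_measurable.
apply: le_trans (le_measure (@lebesgue_measure R) mA mB sub) _.
rewrite bigcup_mkord.
apply: le_trans (Boole_inequality (@lebesgue_measure R) (fun i _ => mS i)) _.
apply: (@le_trans _ _ (\sum_(i < N) (6 * s)%:E)%E).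
  by apply: lee_sum => i _; exact: lebesgue_oballT_le.
by rewrite sumEFin big_const_ord iter_addr addr0 lee_fin !mulr_natl.
Qed.

End OpenArcs.

Section Gauge.
Variables (R : realType) (g : R -> R).
Hypothesis gg : gauge g.

Lemma gauge_le x y : 0 <= x -> x <= y -> g x <= g y.
Proof. by case: gg => + _ _ _; apply. Qed.

Lemma gauge_ge0 x : 0 <= x -> 0 <= g x.
Proof. by case: gg => _ _ g0 _ x0; rewrite -g0 gauge_le. Qed.

Lemma gauge_gt0 x : 0 < x -> 0 < g x.
Proof.
case: gg => _ _ _ gpos x0; rewrite lt0r gauge_ge0 ?ltW // andbT.
by apply/eqP => /(gpos _ (ltW x0)) x_eq0; rewrite x_eq0 ltxx in x0.
Qed.

End Gauge.

Section Packing.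
Variables (R : realType) (G : set R) (g : R -> R).
Hypothesis gg : gauge g.

Lemma packing_delta_ge0 delta : (0 <= packing_delta g delta G)%E.
Proof.
apply: ereal_sup_ubound; exists set0, (fun=> 0), (fun=> 0).
by split=> //; rewrite esum_set0.
Qed.

Definition separated (r : R) (N : nat) (c : nat -> R) :=
  (forall i, (i < N)%N -> G (c i)) /\
  (forall i j, (i < N)%N -> (j < N)%N -> i <> j -> 2 * r < dT (c i) (c j)).

Lemma separated_le_packing_delta delta r N c : 0 < r <= 2^-1 -> 2 * r < delta ->
  separated r N c -> ((N%:R * g r)%:E <= packing_delta g delta G)%E.
Proof.
move=> /andP [r0 r1] rdelta [cG csep].
set f := fun i => (g (diamT (ballT (c i) r)))%:E.
have f0 i : (0 <= f i)%E by rewrite lee_fin gauge_ge0 ?diamT_ge0.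
apply: (@le_trans _ _ (\esum_(i in [set i | (i < N)%N]) f i)); last first.
  apply: ereal_sup_ubound; exists [set i | (i < N)%N], c, (fun _ => r); split => //.
  - move=> i /= iN; split => //; first exact: cG.
    by apply: le_lt_trans (diamT_ballT_le _ (ltW r0)) _.
  - move=> i j /= iN jN ij; apply/seteqP; split => // x [/= ix jx].
    have := dT_triangle (c i) x (c j); have := csep i j iN jN ij.
    by rewrite [dT x _]dTC /ballT /= in ix jx *; lra.
rewrite -nneseries_esum; last by move=> n _; exact: f0.
apply: le_trans (nneseries_lim_ge N _); last by move=> n _ _; exact: f0.
rewrite big_nat_cond (eq_bigl (fun i => (0 <= i < N)%N && true)) -?big_nat_cond;
  last by move=> i; case: (i < N)%N; rewrite ?andbF ?andbT.
apply: (@le_trans _ _ (\sum_(0 <= i < N) (g r)%:E)).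
  by rewrite sumEFin big_const_nat subn0 iter_addr addr0 mulr_natl.
apply: lee_sum => i _; rewrite /f lee_fin gauge_le ?(ltW r0) //.
by apply: le_diamT_ballT; rewrite (ltW r0).
Qed.

Lemma separated_extend r N c y : separated r N c -> G y ->
  (forall i, (i < N)%N -> 2 * r < dT (c i) y) ->
  separated r N.+1 (fun i => if i == N then y else c i).
Proof.
move=> [cG csep] Gy yfar.
have lt_neq i : (i < N.+1)%N -> i != N -> (i < N)%N.
  by rewrite ltnS leq_eqVlt => /orP [/eqP ->|//]; rewrite eqxx.
split=> [i iN|i j iN jN ij].
  by case: eqVneq => [//|/(lt_neq _ iN)]; exact: cG.
case: (eqVneq i N) => [iE|/(lt_neq _ iN) iN'];
  case: (eqVneq j N) => [jE|/(lt_neq _ jN) jN'].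
- by exfalso; apply: ij; rewrite iE jE.
- by rewrite dTC; exact: yfar.
- exact: yfar.
- exact: csep.
Qed.

(* A maximal 2r-separated family in G; it is finite because each of its
   members contributes g(r) to the finite packing premeasure. *)
Lemma separated_cover delta r : 0 < r <= 2^-1 -> 2 * r < delta ->
  (packing_delta g delta G < +oo)%E ->
  exists N c, ((N%:R * g r)%:E <= packing_delta g delta G)%E /\
    forall y, G y -> exists2 i, (i < N)%N & dT (c i) y <= 2 * r.
Proof.
move=> r_range rdelta Pfin.
have Psep := separated_le_packing_delta r_range rdelta.
apply: contrapT => no_cover.
have sep_all N : exists c, separated r N c.
  elim: N => [|N [c sep_c]]; first by exists (fun=> 0); split.
  suff [y Gy yfar] : exists2 y, G y & forall i, (i < N)%N -> 2 * r < dT (c i) y.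
    by exists (fun i => if i == N then y else c i); exact: separated_extend.
  apply: contrapT => no_far; apply: no_cover; exists N, c.
  split; [exact: Psep _ _ sep_c|move=> y Gy].
  apply: contrapT => ny; apply: no_far; exists y => // i iN.
  by rewrite ltNge; apply/negP => yi; apply: ny; exists i.
have [r0 _] := andP r_range.
have gr0 : 0 < g r := gauge_gt0 gg r0.
set M := fine (packing_delta g delta G).
have PM : packing_delta g delta G = M%:E.
  by rewrite /M fineK // ge0_fin_numE ?packing_delta_ge0.
have [c sep_c] := sep_all (Num.bound (M / g r)).
have M0 : 0 <= M by rewrite -lee_fin -PM packing_delta_ge0.
have := Psep _ _ sep_c; rewrite PM lee_fin -ler_pdivlMr //.
by rewrite leNgt archi_boundP // divr_ge0 // ltW.
Qed.

Lemma nbhd_cover_measure_le delta M r : 0 < r <= 3^-1 -> 2 * r < delta ->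
  packing_delta g delta G = M%:E ->
  exists B, [/\ measurable B, (forall x y, G y -> dT y x < r -> B x) &
    (lebesgue_measure (B `&` `[0%R, 1%R[) <= (18 * M * (r / g r))%:E)%E].
Proof.
move=> /andP [r0 r3] rdelta PM.
have r_range : 0 < r <= 2^-1 by apply/andP; split; lra.
have [|N [c [NM cover]]] := separated_cover r_range rdelta; first by rewrite PM ltry.
exists (\bigcup_(i < N) oballT (c i) (3 * r)); split.
- by apply: bigcup_measurable => i _; exact: measurable_oballT.
- move=> x y Gy yx; have [i iN ciy] := cover y Gy; exists i => //.
  by rewrite /oballT /=; apply: le_lt_trans (dT_triangle _ y _) _; lra.
- apply: le_trans (lebesgue_bigcup_oballT_le _ _ _ _) _; [lra|lra|].
  have gr0 := gauge_gt0 gg r0.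
  move: NM; rewrite PM !lee_fin -ler_pdivlMr // => NM.
  have -> : 18 * M * (r / g r) = M / g r * (6 * (3 * r)).
    by field; exact: lt0r_neq0.
  by rewrite ler_wpM2r //; lra.
Qed.

(* Small radii are handled by the packing bound at a fixed scale delta, the
   others by the trivial bound 1 <= g 1 / r0 * (r / g r). *)
Lemma nbhd_measure_le : (packing_premeasure g G < +oo)%E ->
  exists2 K, 0 <= K & forall r, 0 < r <= 1 -> exists B, [/\ measurable B,
     (forall x y, G y -> dT y x < r -> B x) &
     (lebesgue_measure (B `&` `[0%R, 1%R[) <= (K * (r / g r))%:E)%E].
Proof.
move=> Pfin; have [_ [delta /= delta0 <-] Pdelta] := ereal_inf_lt Pfin.
set r0 := Num.min (delta / 4) (4^-1).
have r0_gt0 : 0 < r0 by rewrite lt_min; apply/andP; split; lra.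
have [r0_delta r0_4] : r0 <= delta / 4 /\ r0 <= 4^-1.
  by split; rewrite ge_min lexx ?orbT.
set M := fine (packing_delta g delta G).
have PM : packing_delta g delta G = M%:E.
  by rewrite /M fineK // ge0_fin_numE ?packing_delta_ge0.
have M0 : 0 <= M by rewrite -lee_fin -PM packing_delta_ge0.
have g1 : 0 < g 1 by exact: gauge_gt0.
exists (18 * M + g 1 / r0) => [|r /andP [r_gt0 r1]].
  by rewrite addr_ge0 ?divr_ge0 //; lra.
have gr0 := gauge_gt0 gg r_gt0.
have [r_small|r_large] := ltP r r0.
- have r_range : 0 < r <= 3^-1 by apply/andP; split; lra.
  have rdelta : 2 * r < delta by lra.
  have [B [mB Bnbhd lebB]] := nbhd_cover_measure_le r_range rdelta PM.
  exists B; split=> //; apply: le_trans lebB _.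
  by rewrite lee_fin ler_wpM2r ?lerDl ?divr_ge0 //; lra.
- exists setT; split=> //; rewrite setTI lebesgue_measure_itv /= lte_fin ltr01.
  rewrite -EFinD subr0 lee_fin.
  have one_le : (1 <= g 1 / r0 * (r / g r))%R.
    have -> : g 1 / r0 * (r / g r) = (g 1 * r) / (g r * r0).
      by field; apply/andP; split; exact: lt0r_neq0.
    rewrite ler_pdivlMr ?mul1r ?mulr_gt0 //.
    by apply: ler_pM; [exact: ltW|exact: ltW|exact: (gauge_le gg (ltW r_gt0) r1)|].
  apply: le_trans one_le _.
  by rewrite ler_wpM2r ?lerDr ?divr_ge0 //; lra.
Qed.

End Packing.

Section NonnegSeries.
Variable R : realType.
Implicit Types (t : nat -> \bar R) (P : pred nat).

Lemma nneseries_tail_lt t P : (forall n, P n -> 0 <= t n)%E ->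
  (\sum_(n <oo | P n) t n < +oo)%E -> forall e : R, 0 < e ->
  exists N, forall M, (N <= M)%N -> (\sum_(M <= k <oo | P k) t k < e%:E)%E.
Proof.
move=> t0 tfin e e0; have tail0 := nneseries_tail_cvg tfin t0.
have [N _ tailN] : \forall M \near \oo, (\sum_(M <= k <oo | P k) t k < e%:E)%E.
  apply: (tail0 [set y | (y < e%:E)%E]); apply/nbhs_EFin => /=.
  by near=> y; rewrite lte_fin; near: y; exact: lt_nbhsl e0.
by exists N => M NM; exact: tailN.
Unshelve. all: by end_near.
Qed.

Lemma nneseries_term_lt t : (forall n, 0 <= t n)%E ->
  (\sum_(n <oo) t n < +oo)%E -> forall e : R, 0 < e ->
  exists N, forall n, (N <= n)%N -> (t n < e%:E)%E.
Proof.
move=> t0 tfin e e0; have [N tailN] := nneseries_tail_lt (fun n _ => t0 n) tfin e0.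
exists N => n Nn; apply: le_lt_trans (tailN n Nn).
by have := @nneseries_lim_ge R t xpredT n n.+1 (fun k _ _ => t0 k); rewrite big_nat1.
Qed.

Lemma nneseries_lt_pinfty_le (u : nat -> \bar R) (v : nat -> R) (C : R) :
  0 <= C -> (forall n, 0 <= u n)%E -> (forall n, 0 <= v n) ->
  (forall n, u n <= (C * v n)%:E)%E ->
  (\sum_(n <oo) (v n)%:E < +oo)%E -> (\sum_(n <oo) u n < +oo)%E.
Proof.
move=> C0 u0 v0 uv vfin.
apply: (@le_lt_trans _ _ (\sum_(n <oo) (C%:E * (v n)%:E))%E).
  by apply: lee_nneseries => [n _ _|n _]; [exact: u0|rewrite -EFinM; exact: uv].
by rewrite nneseriesZl ?lte_mul_pinfty // => n _; rewrite lee_fin.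
Qed.

End NonnegSeries.

Section HausdorffCantelli.
Variables (R : realType) (h : R -> R).
Hypothesis hg : gauge h.

Lemma hausdorff_delta_ge0 delta (A : set R) : (0 <= hausdorff_delta h delta A)%E.
Proof.
apply: le_ereal_inf_tmp => _ [U _ <-]; apply: nneseries_ge0 => n _ _.
by rewrite lee_fin gauge_ge0 ?diamT_ge0.
Qed.

(* For N large, the arcs of index >= N in P form a delta-cover of A whose
   h-sum is a tail of the convergent series. *)
Lemma hausdorff_cantelli (A : set R) (Y rho : nat -> R) (P : pred nat) :
  (forall n, 0 < rho n) ->
  (forall d, 0 < d -> exists N, forall n, (N <= n)%N -> rho n <= d) ->
  (\sum_(n <oo | P n) (h (2 * rho n))%:E < +oo)%E ->
  (forall x, A x -> forall N, exists n, [/\ (N <= n)%N, P n & dT (Y n) x < rho n]) ->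
  hausdorff_measure h A = 0%E.
Proof.
move=> rho0 rho_small hfin cover.
apply/eqP; rewrite eq_le; apply/andP; split; last first.
  apply: le_trans (hausdorff_delta_ge0 1 A) _.
  by apply: ereal_sup_ubound; exists 1 => //=; exact: ltr01.
apply: ge_ereal_sup => _ [delta /= delta0 <-].
apply/lee_addgt0Pr => e e0; rewrite add0e.
have [|N1 rhoN1] := rho_small (delta / 2); first by rewrite divr_gt0.
have [|N2 tailN2] := nneseries_tail_lt _ hfin e0.
  by move=> n _; rewrite lee_fin gauge_ge0 // mulr_ge0 // ltW.
set N := maxn N1 N2.
set U := fun i => [set x | [/\ (N <= i)%N, P i & dT (Y i) x < rho i]].
have diamU i : diamT (U i) <= if (N <= i)%N && P i then 2 * rho i else 0.
  apply: diamT_le => [|x y [Ni Pi xi] [_ _ yi]].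
    by case: ifP => // _; rewrite mulr_ge0 // ltW.
  rewrite Ni Pi /=; have := dT_triangle x (Y i) y; rewrite (dTC x (Y i)); lra.
apply: (@le_trans _ _ (\sum_(0 <= i <oo) (h (diamT (U i)))%:E)%E).
  apply: ereal_inf_lbound; exists U => //; split.
    by move=> x Ax; have [n [Nn Pn xn]] := cover x Ax N; exists n.
  move=> i; apply: le_trans (diamU i) _; case: ifP => [/andP [Ni _]|_].
    by have := rhoN1 i (leq_trans (leq_maxl _ _) Ni); lra.
  exact: ltW.
apply: le_trans (ltW (tailN2 N (leq_maxr _ _))).
rewrite [X in (_ <= X)%E]ereal_series_cond [X in (_ <= X)%E]eseries_mkcond.
apply: lee_nneseries => i _.
  by move=> _; rewrite lee_fin gauge_ge0 ?diamT_ge0.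
have := gauge_le hg (diamT_ge0 (U i)) (diamU i).
by case: ifP; rewrite ?lee_fin //; case: hg => _ _ -> _.
Qed.

End HausdorffCantelli.

Section BorelCantelli.
Context d (T : measurableType d) (R : realType) (mu : {measure set T -> \bar R}).
Variable F : nat -> set T.
Hypothesis mF : forall n, measurable (F n).

Lemma ae_not_lim_sup_set : (\sum_(n <oo) mu (F n) < +oo)%E ->
  {ae mu, forall w, ~ lim_sup_set F w}.
Proof.
move=> Ffin; exists (lim_sup_set F); split; last by move=> w /= /contrapT.
- by apply: bigcapT_measurable => n; apply: bigcup_measurable => k _.
- exact: lim_sup_set_cvg0.
Qed.

Lemma ae_nneseries_mem_lt_pinfty (a : nat -> R) : (forall n, 0 <= a n) ->
  (\sum_(n <oo) ((a n)%:E * mu (F n)) < +oo)%E ->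
  {ae mu, forall w, (\sum_(n <oo | w \in F n) (a n)%:E < +oo)%E}.
Proof.
move=> a0 afin.
have f0 n w : (0 <= (a n * \1_(F n) w)%:E)%E by rewrite lee_fin mulr_ge0.
have mf n : measurable_fun setT (fun w => (a n * \1_(F n) w)%:E).
  by apply/measurable_EFinP/measurable_funM => //; exact: measurable_indic.
have sum_f0 w : (0 <= \sum_(n <oo) (a n * \1_(F n) w)%:E)%E.
  by apply: nneseries_ge0.
have int_f : mu.-integrable setT (fun w => \sum_(n <oo) (a n * \1_(F n) w)%:E)%E.
  apply/integrableP; split; first exact: ge0_emeasurable_sum.
  under eq_integral => w _ do rewrite gee0_abs //.
  rewrite integral_nneseries //; apply: le_lt_trans afin.
  apply: lee_nneseries => [n _ _|n _]; first exact: integral_ge0.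
  rewrite (integralZl_indic _ (fun _ => F n)) //; last by rewrite ltNge a0.
  by rewrite integral_indic // setIT.
apply: filterS (integrable_ae measurableT int_f) => w /(_ I) /fin_numPlt /andP [_].
suff -> : (\sum_(n <oo | w \in F n) (a n)%:E = \sum_(n <oo) (a n * \1_(F n) w)%:E)%E
  by [].
rewrite eseries_mkcond; apply: eq_eseriesr => n _.
by rewrite indicE; case: (w \in F n); rewrite ?mulr1 ?mulr0.
Qed.

End BorelCantelli.

Lemma radius_eventually_le (R : realType) (g h : R -> R) (r : nat -> R) :
  gauge g -> gauge h -> (forall n, 0 < r n <= 1) ->
  (\sum_(n <oo) ((h (r n) * r n / g (r n))%:E) < +oo)%E ->
  forall d, 0 < d -> exists N, forall n, (N <= n)%N -> r n <= d.
Proof.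
move=> gg hg r_range sum_fin d d0.
have g1 := gauge_gt0 gg ltr01.
have eta0 : 0 < h d * d / g 1.
  by rewrite mulr_gt0 ?invr_gt0 // mulr_gt0 // gauge_gt0.
have term0 n : (0 <= (h (r n) * r n / g (r n))%:E)%E.
  have [rn0 _] := andP (r_range n).
  by rewrite lee_fin !mulr_ge0 ?invr_ge0 ?gauge_ge0 ?ltW.
have [N termN] := nneseries_term_lt term0 sum_fin eta0.
exists N => n Nn; have [rn0 rn1] := andP (r_range n).
rewrite leNgt; apply/negP => d_rn.
have := termN n Nn; rewrite lte_fin ltNge => /negP; apply.
have hle : h d <= h (r n) := gauge_le hg (ltW d0) (ltW d_rn).
have gle : g (r n) <= g 1 := gauge_le gg (ltW rn0) rn1.
apply: ler_pM.
- by rewrite mulr_ge0 ?(gauge_ge0 hg) ?ltW.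
- by rewrite invr_ge0 ltW.
- exact: ler_pM (gauge_ge0 hg (ltW d0)) (ltW d0) hle (ltW d_rn).
- by rewrite lef_pV2 ?posrE ?(gauge_gt0 gg).
Qed.

Lemma nbhd_hitting_events (R : realType) d (Omega : measurableType d)
  (mu : {measure set Omega -> \bar R}) (X : nat -> Omega -> R) (r : nat -> R)
  (G : set R) (g : R -> R) :
  (forall n, measurable_fun setT (X n)) ->
  (forall n (A : set R), measurable A ->
     mu (X n @^-1` A) = (@lebesgue_measure R) (A `&` `[0%R, 1%R[)) ->
  (forall n, 0 < r n <= 1) -> gauge g -> (packing_premeasure g G < +oo)%E ->
  exists2 K, 0 <= K & exists F : nat -> set Omega,
    [/\ forall n, measurable (F n),
        forall n, (mu (F n) <= (K * (r n / g (r n)))%:E)%E &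
        forall w x, (Eset (fun n => X n w) r `&` G) x ->
          forall N, exists n, [/\ (N <= n)%N, F n w & dT (X n w) x < r n]].
Proof.
move=> mX Xlaw r_range gg Pfin.
have [K K0 nbhd] := nbhd_measure_le gg Pfin.
have /choice [B HB] n := nbhd (r n) (r_range n).
exists K => //; exists (fun n => X n @^-1` B n); split.
- by move=> n; have [mB _ _] := HB n; have := mX n measurableT _ mB; rewrite setTI.
- by move=> n; have [mB _ lebB] := HB n; rewrite Xlaw.
- move=> w x [Ex Gx] N; have [n [Nn xn]] := Ex N.
  exists n; split; [done| |by rewrite dTC].
  by have [_ Bnbhd _] := HB n; exact: Bnbhd Gx xn.
Qed.

Unset Implicit Arguments.

Theorem theorem3p1 (R : realType) (d : measure_display) (Omega : measurableType d)
  (P : probability Omega R) (X : nat -> Omega -> R) (r : nat -> R)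
  (G : set R) (g : R -> R) :
  (forall n, measurable_fun setT (X n)) ->
  (forall n (A : set R), measurable A ->
     P (X n @^-1` A) = (@lebesgue_measure R) (A `&` `[0%R, 1%R[)) ->
  (forall n, 0 < r n <= 1) ->
  G !=set0 -> compact G ->
  gauge g -> doubling g -> (packing_premeasure g G < +oo)%E ->
  ((\sum_(0 <= n <oo) ((r n / g (r n))%:E) < +oo)%E ->
      {ae P, forall w, Eset (fun n => X n w) r `&` G = set0})
  /\
  (forall h : R -> R, gauge h -> doubling h ->
     (\sum_(0 <= n <oo) ((h (r n) * r n / g (r n))%:E) < +oo)%E ->
      {ae P, forall w, hausdorff_measure h (Eset (fun n => X n w) r `&` G) = 0%E}).
Proof.
move=> mX Xlaw r_range _ _ gg _ Pfin.
have r0 n : 0 < r n by case/andP: (r_range n).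
have [K K0 [F [mF PF hitF]]] := nbhd_hitting_events mX Xlaw r_range gg Pfin.
have ratio0 n : 0 <= r n / g (r n) by rewrite divr_ge0 ?ltW ?(gauge_gt0 gg).
split=> [sum_fin | h hg [C [C0 h_doubling]] sum_fin].
- apply: filterS (ae_not_lim_sup_set mF _) => [w not_limsup|].
    apply/seteqP; split => // x Ex; apply: not_limsup => N _.
    by have [n [Nn Fn _]] := hitF w x Ex N; exists n.
  exact: nneseries_lt_pinfty_le K0 (fun n => measure_ge0 _ _) ratio0 PF sum_fin.
- have a0 n : 0 <= h (2 * r n) by rewrite (gauge_ge0 hg) // mulr_ge0 // ltW.
  apply: filterS (ae_nneseries_mem_lt_pinfty mF a0 _) => [w sum_w|].
    apply: (hausdorff_cantelli hg (Y := fun n => X n w) r0 _ sum_w).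
      exact: radius_eventually_le gg hg r_range sum_fin.
    by move=> x Ex N; have [n [Nn Fn xn]] := hitF w x Ex N; exists n; rewrite inE.
  apply: nneseries_lt_pinfty_le (mulr_ge0 (ltW C0) K0) _ _ _ sum_fin.
  + by move=> n; rewrite mule_ge0 // lee_fin.
  + by move=> n; rewrite divr_ge0 ?mulr_ge0 ?(gauge_ge0 hg) ?(gauge_ge0 gg) ?ltW.
  + move=> n; apply: le_trans (lee_wpmul2l _ (PF n)) _; first by rewrite lee_fin.
    have -> : C * K * (h (r n) * r n / g (r n)) = C * h (r n) * (K * (r n / g (r n))).
      by ring.
    by rewrite -EFinM lee_fin ler_wpM2r ?(h_doubling _ (r0 n)) ?(mulr_ge0 K0).
Qed.
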